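(* Assume (A.1)–(A.3). For every $z>0$ and every $\overline{s}\ge 0$, the system of equations $$\delta=\tfrac{1}{L}\mathrm{Tr}\big[\mathbf R_1\big(z\mathbf I_N+(\overline{s}\,\overline{\omega}+\gamma\underline{\omega})\mathbf R_1\big)^{-1}\big],\qquad \overline{\omega}=\tfrac1L\mathrm{Tr}\big[\mathbf T_1(\mathbf I_L+\overline{s}\delta\mathbf T_1+\delta\gamma\mathbf R_2\mathbf T_1)^{-1}\big],$$ $$\underline{\omega}=\tfrac1L\mathrm{Tr}\big[\mathbf R_2\mathbf T_1(\mathbf I_L+\overline{s}\delta\mathbf T_1+\delta\gamma\mathbf R_2\mathbf T_1)^{-1}\big],\qquad \gamma=\tfrac1M\mathrm{Tr}\big[\mathbf T_2(\mathbf I_M+\tfrac LM\delta\underline{\omega}\mathbf T_2)^{-1}\big]$$ admits a unique solution $(\delta,\overline{\omega},\underline{\omega},\gamma)\in(0,\infty)^4$.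
   Context: $N,L,M$ are positive integers with $L=L(N)$, $M=M(N)$. $\mathbf R_1\in\mathbb C^{N\times N}$, $\mathbf R_2,\mathbf T_1\in\mathbb C^{L\times L}$, $\mathbf T_2\in\mathbb C^{M\times M}$ are deterministic Hermitian positive semidefinite matrices. Assumptions: (A.1) $0\le\liminf_N M/N\le\limsup_N M/N<\infty$ and $0<\liminf_N L/N\le\limsup_N L/N<\infty$; (A.2) $\sup_{N\ge1}\max\{\|\mathbf R_1\|,\|\mathbf R_2\|,\|\mathbf T_1\|,\|\mathbf T_2\|\}\le r<\infty$ (spectral norm); (A.3) $\inf_{N\ge1}\min\{\frac1L\mathrm{Tr}(\mathbf R_2\mathbf T_1),\frac1N\mathrm{Tr}\mathbf R_1,\frac1L\mathrm{Tr}\mathbf R_2,\frac1L\mathrm{Tr}\mathbf T_1,\frac1M\mathrm{Tr}\mathbf T_2\}\ge l>0$. *)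

From HB Require Import structures.
From mathcomp Require Import all_boot all_order all_algebra.
From mathcomp Require Import all_classical all_reals.
From mathcomp.real_closed Require Import complex.
Set Implicit Arguments. Unset Strict Implicit. Unset Printing Implicit Defensive.
Import Order.TTheory GRing.Theory Num.Theory.
Local Open Scope ring_scope.
Local Open Scope classical_set_scope.

Definition adjmx (R : rcfType) (m n : nat) (A : 'M[R[i]]_(m, n)) : 'M[R[i]]_(n, m) :=
  \matrix_(i < n, j < m) (A j i)^*.

Definition hermitian_psd (R : rcfType) (n : nat) (A : 'M[R[i]]_n) : Prop :=
  adjmx A = A /\ forall x : 'cV[R[i]]_n, 0 <= (adjmx x *m A *m x) 0 0.

Definition vnorm (R : rcfType) (n : nat) (x : 'cV[R[i]]_n) : R :=
  Num.sqrt (complex.Re ((adjmx x *m x) 0 0)).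

Definition specnorm (R : realType) (m n : nat) (A : 'M[R[i]]_(m, n)) : R :=
  sup [set vnorm (A *m x) | x in [set x : 'cV[R[i]]_n | vnorm x <= 1]].

Local Open Scope complex_scope.

Definition is_solution (R : realType) (N L M : nat)
  (R1 : 'M[R[i]]_N) (R2 T1 : 'M[R[i]]_L) (T2 : 'M[R[i]]_M)
  (z s delta omb omu gam : R) : Prop :=
  let Q := invmx (1%:M + (s * delta)%:C *: T1 + (delta * gam)%:C *: (R2 *m T1)) in
  [/\ delta%:C = (L%:R)^-1 * \tr (R1 *m invmx (z%:C%:M + (s * omb + gam * omu)%:C *: R1)),
      omb%:C = (L%:R)^-1 * \tr (T1 *m Q),
      omu%:C = (L%:R)^-1 * \tr (R2 *m T1 *m Q)
    & gam%:C = (M%:R)^-1 * \tr (T2 *m invmx (1%:M + ((L%:R / M%:R) * delta * omu)%:C *: T2))].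

From HB Require Import structures.
From mathcomp Require Import all_boot all_order all_algebra.
From mathcomp Require Import all_classical all_reals.
From mathcomp.real_closed Require Import complex.
From mathcomp Require Import sesquilinear spectral ring.
Import Order.TTheory GRing.Theory Num.Theory.
Set Implicit Arguments. Unset Strict Implicit. Unset Printing Implicit Defensive.
Local Open Scope ring_scope.
Local Open Scope sesquilinear_scope.

(* Substituting the two omega-equations into the others reduces the system to a
   fixed point (delta, gamma) = (F1 (delta, gamma), F2 (delta, gamma)) in (0, oo)^2:
   with S = T1^(1/2) R2 T1^(1/2) and W = (1 + s delta T1 + delta gamma S)^-1 one has
   omega_bar = Tr (T1 W) / L and omega = Tr (S W) / L.  Since the inverse is antitone
   in the Loewner order, F1 increases in delta and decreases in gamma while F2 does the
   opposite, and the trace identity delta (s omega_bar + gamma omega) = 1 - Tr W / L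
   gives the strict scaling inequalities F1 (a delta, gamma / a) < a F1 (delta, gamma)
   and F2 (delta, gamma) < a F2 (a delta, gamma / a) for a > 1.  If two fixed points
   differed, rescaling one of them by the least a > 1 that makes it dominate the other
   would contradict these strict inequalities.  Existence follows as in Tarski's
   theorem: the infimum in delta and supremum in gamma of the bounded set of
   subfixpoints is a fixed point. *)

Section InverseIdentities.
Variables (R : comUnitRingType) (n : nat).
Implicit Types A B P X Y : 'M[R]_n.

Lemma mulmx1_invmx X Y : X *m Y = 1%:M -> invmx X = Y.
Proof.
move=> XY; have [uX _] := mulmx1_unit XY.
by rewrite -[RHS](mulKmx uX) XY mulmx1.
Qed.

Lemma invmxB A B : A \in unitmx -> B \in unitmx ->
  invmx A - invmx B = invmx B *m ((B - A) + (B - A) *m invmx A *m (B - A)) *m invmx B.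
Proof.
move=> uA uB.
have -> : (B - A) + (B - A) *m invmx A *m (B - A) = B *m invmx A *m B - B.
  rewrite [(B - A) *m invmx A]mulmxBl (mulmxV uA) mulmxBl mul1mx mulmxBr.
  by rewrite -[B *m invmx A *m A]mulmxA (mulVmx uA) mulmx1 addrC subrK.
rewrite mulmxBr mulmxBl !mulmxA (mulVmx uB) mul1mx.
by rewrite -mulmxA (mulmxV uB) mulmx1 mul1mx.
Qed.

Lemma mxtrace_mul_shift_inv A : 1%:M + A \in unitmx ->
  \tr (A *m invmx (1%:M + A)) = n%:R - \tr (invmx (1%:M + A)).
Proof.
move=> u; have := congr1 mxtrace (mulmxV u).
by rewrite mulmxDl mul1mx raddfD /= mxtrace1 => <-; rewrite addrAC subrr add0r.
Qed.

(* Push-through: (1 + P B^2)^-1 = 1 - P B (1 + B P B)^-1 B. *)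
Lemma push_through B P : 1%:M + B *m P *m B \in unitmx ->
  1%:M + P *m (B *m B) \in unitmx /\
  (B *m B) *m invmx (1%:M + P *m (B *m B)) = B *m invmx (1%:M + B *m P *m B) *m B.
Proof.
move=> u; set W := invmx (1%:M + B *m P *m B).
have eW : W + B *m P *m B *m W = 1%:M.
  by rewrite -[W in W + _]mul1mx -mulmxDl /W mulmxV.
set Z := P *m B *m W *m B; set Q := P *m (B *m B).
have eZ : Q *m Z = Q - Z.
  have hZQ : Z + Q *m Z = Q.
    have -> : Q *m Z = P *m B *m (B *m P *m B *m W) *m B by rewrite /Q /Z !mulmxA.
    by rewrite /Z -mulmxDl -mulmxDr eW mulmx1 /Q mulmxA.
  by apply: (addrI Z); rewrite hZQ addrC subrK.
have inv : (1%:M + Q) *m (1%:M - Z) = 1%:M.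
  by rewrite mulmxDl mul1mx mulmxBr mulmx1 eZ opprB [Q + _]addrC subrK subrK.
have [u1 _] := mulmx1_unit inv; split => //; rewrite (mulmx1_invmx inv).
have {}eW : W = 1%:M - B *m P *m B *m W by rewrite -eW addrK.
by rewrite mulmxBr mulmx1 [in RHS]eW mulmxBr mulmx1 mulmxBl !mulmxA.
Qed.

End InverseIdentities.

Lemma invmx_scale (F : fieldType) n (d : F) (H : 'M[F]_n) : d != 0 ->
  1%:M + d *: H \in unitmx -> d *: invmx (1%:M + d *: H) = invmx (d^-1%:M + H).
Proof.
move=> d0 u; apply/esym/mulmx1_invmx.
by rewrite -scalemxAr scalemxAl scalerDr scale_scalar_mx mulfV // mulmxV.
Qed.

Section PsdMatrices.
Variable C : numClosedFieldType.

Definition qform n (A : 'M[C]_n) (x : 'cV[C]_n) : C := (x^t* *m A *m x) 0 0.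
Definition psdmx n (A : 'M[C]_n) := A^t* = A /\ forall x, 0 <= qform A x.
Definition pdform n (A : 'M[C]_n) := forall x, x != 0 -> 0 < qform A x.

Lemma trmxC_mul m n p (A : 'M[C]_(m, n)) (B : 'M[C]_(n, p)) : (A *m B)^t* = B^t* *m A^t*.
Proof. by rewrite trmx_mul map_mxM. Qed.

Lemma trmxCD m n (A B : 'M[C]_(m, n)) : (A + B)^t* = A^t* + B^t*.
Proof. by apply/matrixP => i j; rewrite !mxE rmorphD. Qed.

Lemma trmxCZ m n a (A : 'M[C]_(m, n)) : (a *: A)^t* = a^* *: A^t*.
Proof. by apply/matrixP => i j; rewrite !mxE rmorphM. Qed.

Lemma unitarymx_trCK n (U : 'M[C]_n) : U \is unitarymx -> U^t* *m U = 1%:M.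
Proof. by move=> uU; have := mulmxKtV 1%:M uU erefl; rewrite mul1mx. Qed.

Lemma pdform_ge0 n (A : 'M[C]_n) x : pdform A -> 0 <= qform A x.
Proof. by move=> pA; case: (eqVneq x 0) => [->|/pA/ltW //]; rewrite /qform mulmx0 mxE. Qed.

Lemma qformD n (A B : 'M[C]_n) x : qform (A + B) x = qform A x + qform B x.
Proof. by rewrite /qform mulmxDr mulmxDl mxE. Qed.

Lemma qformZ n a (A : 'M[C]_n) x : qform (a *: A) x = a * qform A x.
Proof. by rewrite /qform -scalemxAr -scalemxAl mxE. Qed.

Lemma qform_congr n (X P : 'M[C]_n) x : X^t* = X -> qform (X *m P *m X) x = qform P (X *m x).
Proof. by move=> hX; rewrite /qform trmxC_mul hX !mulmxA. Qed.

Lemma psdmxD n (A B : 'M[C]_n) : psdmx A -> psdmx B -> psdmx (A + B).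
Proof.
move=> [hA nA] [hB nB]; split=> [|x]; last by rewrite qformD addr_ge0.
by rewrite trmxCD hA hB.
Qed.

Lemma psdmxZ n a (A : 'M[C]_n) : 0 <= a -> psdmx A -> psdmx (a *: A).
Proof.
move=> a0 [hA nA]; split=> [|x]; last by rewrite qformZ mulr_ge0.
by rewrite trmxCZ hA conj_Creal ?ger0_real.
Qed.

Lemma psdmx_congr n (X P : 'M[C]_n) : X^t* = X -> psdmx P -> psdmx (X *m P *m X).
Proof.
move=> hX [hP nP]; split=> [|x]; last by rewrite qform_congr.
by rewrite !trmxC_mul hX hP mulmxA.
Qed.

Lemma qform_col_trC n (U P : 'M[C]_n) i : (U *m P *m U^t*) i i = qform P (col i (U^t*)).
Proof.
rewrite /qform !mxE; apply: eq_bigr => k _; rewrite !mxE; congr (_ * _).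
by apply: eq_bigr => j _; rewrite !mxE conjCK.
Qed.

Definition udiag n (U : 'M[C]_n) (e : 'rV[C]_n) := U^t* *m diag_mx e *m U.

Section Udiag.
Variables (n : nat) (U : 'M[C]_n).
Hypothesis uU : U \is unitarymx.
Implicit Types (e f : 'rV[C]_n) (P : 'M[C]_n).

Lemma udiagM e f : udiag U e *m udiag U f = udiag U (\row_i (e 0 i * f 0 i)).
Proof.
rewrite /udiag -!mulmxA (mulmxA U) (unitarymxP uU) mul1mx.
by rewrite (mulmxA (diag_mx e)) mulmx_diag.
Qed.

Lemma udiagD e f : udiag U e + udiag U f = udiag U (e + f).
Proof.
rewrite /udiag -mulmxDl -mulmxDr; congr (_ *m _ *m _).
by apply/matrixP => i j; rewrite !mxE; case: eqP; rewrite ?mulr1n ?mulr0n ?addr0.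
Qed.

Lemma udiagZ a e : a *: udiag U e = udiag U (a *: e).
Proof.
rewrite /udiag scalemxAl scalemxAr; congr (_ *m _ *m _).
by apply/matrixP => i j; rewrite !mxE; case: eqP; rewrite ?mulr1n ?mulr0n ?mulr0.
Qed.

Lemma scalar_udiag a : a%:M = udiag U (const_mx a).
Proof.
by rewrite /udiag diag_const_mx mul_mx_scalar -scalemxAl unitarymx_trCK // scalemx1.
Qed.

Lemma mxtrace_udiag e : \tr (udiag U e) = \sum_i e 0 i.
Proof. by rewrite /udiag mxtrace_mulC mulmxA (unitarymxP uU) mul1mx mxtrace_diag. Qed.

Lemma udiag_mulV e : (forall i, e 0 i != 0) ->
  udiag U e *m udiag U (\row_i (e 0 i)^-1) = 1%:M.
Proof.
move=> ne; rewrite udiagM (scalar_udiag 1); congr udiag.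
by apply/matrixP => i j; rewrite !mxE mulfV.
Qed.

Lemma qform_udiag e x :
  qform (udiag U e) x = \sum_i e 0 i * ((U *m x) i 0 * ((U *m x) i 0)^*).
Proof.
rewrite /qform /udiag -!mulmxA mulmxA -trmxC_mul mul_diag_mx mxE.
by apply: eq_bigr => i _; rewrite !mxE mulrCA [X in _ * X]mulrC.
Qed.

Lemma udiag_psd e : (forall i, 0 <= e 0 i) -> psdmx (udiag U e).
Proof.
move=> e0; split=> [|x]; last first.
  by rewrite qform_udiag; apply: sumr_ge0 => i _; rewrite mulr_ge0 ?mul_conjC_ge0.
rewrite /udiag !trmxC_mul trmxCK mulmxA; congr (_ *m _ *m _).
apply/matrixP => i j; rewrite !mxE.
by case: (eqVneq i j) => [->|_]; rewrite ?mulr1n ?conj_Creal ?ger0_real ?mulr0n ?conjC0.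
Qed.

Lemma udiag_pdform e : (forall i, 0 < e 0 i) -> pdform (udiag U e).
Proof.
move=> e0 x x0; rewrite qform_udiag.
have /cV0Pn [i hi] : U *m x != 0.
  apply: contraNneq x0 => Ux0.
  by rewrite -(mul1mx x) -(unitarymx_trCK uU) -mulmxA Ux0 mulmx0.
rewrite (bigD1 i) //= ltr_wpDr //; last by rewrite mulr_gt0 // mul_conjC_gt0.
by apply: sumr_ge0 => k _; rewrite mulr_ge0 ?mul_conjC_ge0 ?ltW.
Qed.

Lemma udiag_conj e : U *m udiag U e *m U^t* = diag_mx e.
Proof.
by rewrite /udiag !mulmxA (unitarymxP uU) mul1mx -mulmxA (unitarymxP uU) mulmx1.
Qed.

Lemma mxtrace_udiag_mul e P :
  \tr (udiag U e *m P) = \sum_i e 0 i * qform P (col i (U^t*)).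
Proof.
rewrite /udiag -!mulmxA mxtrace_mulC -!mulmxA; apply: eq_bigr => i _.
by rewrite mul_diag_mx mxE -qform_col_trC !mulmxA.
Qed.

Lemma col_trC_unitary_neq0 i : col i (U^t*) != 0.
Proof.
apply/negP => /eqP h; have := unitarymxP uU => /matrixP /(_ i i).
rewrite !mxE eqxx mulr1n => /esym/eqP; rewrite big1 ?oner_eq0 // => k _.
by have := congr1 (fun M : 'cV[C]_n => M k 0) h; rewrite !mxE => ->; rewrite mulr0.
Qed.

End Udiag.
End PsdMatrices.

Section SpectralPsd.
Variable C : numClosedFieldType.

Lemma hermitian_udiag_spectral n (A : 'M[C]_n) : A^t* = A ->
  A = udiag (spectralmx A) (spectral_diag A).
Proof.
move=> hA; have hs : A \is hermsymmx by apply/is_hermitianmxP; rewrite expr0 scale1r hA.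
move: (hermitian_normalmx hs) => /orthomx_spectralP eA.
by rewrite {1}eA invmx_unitary ?spectral_unitarymx.
Qed.

Lemma mxtrace_spectral n (A : 'M[C]_n) : A^t* = A -> \tr A = \sum_i spectral_diag A 0 i.
Proof.
by move=> hA; rewrite {1}(hermitian_udiag_spectral hA) mxtrace_udiag ?spectral_unitarymx.
Qed.

Lemma psdmx_spectral_ge0 n (A : 'M[C]_n) i : psdmx A -> 0 <= spectral_diag A 0 i.
Proof.
move=> [hA nA]; have := udiag_conj (spectral_unitarymx A) (spectral_diag A).
rewrite -hermitian_udiag_spectral // => /matrixP /(_ i i).
by rewrite qform_col_trC mxE eqxx mulr1n => <-.
Qed.

Lemma psdmx_spectral_gt0 n (A : 'M[C]_n) : psdmx A -> 0 < \tr A ->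
  exists i, 0 < spectral_diag A 0 i.
Proof.
move=> pA; rewrite mxtrace_spectral ?pA.1 // => /gt_eqF/eqP/psumr_neq0P.
by case=> [i _|i /andP[_ ei]]; [exact: psdmx_spectral_ge0 | exists i].
Qed.

Lemma mxtrace_psd_mul_ge0 n (K P : 'M[C]_n) : psdmx K -> (forall x, 0 <= qform P x) ->
  0 <= \tr (K *m P).
Proof.
move=> pK nP; rewrite (hermitian_udiag_spectral pK.1).
rewrite mxtrace_udiag_mul ?spectral_unitarymx //.
by apply: sumr_ge0 => i _; rewrite mulr_ge0 ?psdmx_spectral_ge0.
Qed.

Lemma mxtrace_psd_mul_gt0 n (K P : 'M[C]_n) : psdmx K -> 0 < \tr K -> pdform P ->
  0 < \tr (K *m P).
Proof.
move=> pK trK pP; have uU := spectral_unitarymx K.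
have [i ei] := psdmx_spectral_gt0 pK trK.
rewrite (hermitian_udiag_spectral pK.1) mxtrace_udiag_mul // (bigD1 i) //= ltr_wpDr //.
  by apply: sumr_ge0 => k _; rewrite mulr_ge0 ?psdmx_spectral_ge0 ?pdform_ge0.
by rewrite mulr_gt0 ?pP ?col_trC_unitary_neq0.
Qed.

Lemma psdmx_scalar n (a : C) : 0 <= a -> psdmx (a%:M : 'M[C]_n).
Proof.
move=> a0; have u1 : (1%:M : 'M[C]_n) \is unitarymx.
  by apply/unitarymxP; rewrite trmx1 map_mx1 mulmx1.
by rewrite (scalar_udiag u1 a); apply: udiag_psd => i; rewrite mxE.
Qed.

Lemma psdmx_shift_inv n (c : C) (G : 'M[C]_n) : 0 < c -> psdmx G ->
  [/\ c%:M + G \in unitmx, psdmx (invmx (c%:M + G)) & pdform (invmx (c%:M + G))].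
Proof.
move=> c0 pG; have uU := spectral_unitarymx G.
have -> : c%:M + G = udiag (spectralmx G) (const_mx c + spectral_diag G).
  by rewrite [in LHS](hermitian_udiag_spectral pG.1) (scalar_udiag uU c) udiagD.
have pos i : 0 < (const_mx c + spectral_diag G) 0 i.
  by rewrite !mxE ltr_wpDr ?psdmx_spectral_ge0.
have inv := udiag_mulV uU (fun i => lt0r_neq0 (pos i)).
have [uG _] := mulmx1_unit inv; rewrite (mulmx1_invmx inv).
by split=> //; [apply: udiag_psd | apply: udiag_pdform] => // i;
  rewrite mxE ?invr_ge0 ?invr_gt0 ?ltW.
Qed.

Lemma mxtrace_invmx_shift_le n (c c' : C) (G G' K : 'M[C]_n) :
  0 < c -> 0 < c' -> psdmx G -> psdmx G' ->
  psdmx ((c'%:M + G') - (c%:M + G)) -> psdmx K ->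
  \tr (K *m invmx (c'%:M + G')) <= \tr (K *m invmx (c%:M + G)).
Proof.
move=> c0 c'0 pG pG' pD pK.
have [uA pAi _] := psdmx_shift_inv c0 pG; have [uB pBi _] := psdmx_shift_inv c'0 pG'.
rewrite -subr_ge0 -raddfB /= -mulmxBr (invmxB uA uB).
apply: mxtrace_psd_mul_ge0 => //; apply: (psdmx_congr pBi.1 _).2.
exact: psdmxD pD (psdmx_congr pD.1 pAi).
Qed.

Definition sqrtmx n (T : 'M[C]_n) :=
  udiag (spectralmx T) (\row_i sqrtC (spectral_diag T 0 i)).

Lemma sqrtmx_psd n (T : 'M[C]_n) : psdmx T -> psdmx (sqrtmx T).
Proof.
by move=> pT; apply: udiag_psd => i; rewrite mxE sqrtC_ge0 psdmx_spectral_ge0.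
Qed.

Lemma sqrtmxK n (T : 'M[C]_n) : psdmx T -> sqrtmx T *m sqrtmx T = T.
Proof.
move=> pT; rewrite udiagM ?spectral_unitarymx // [RHS](hermitian_udiag_spectral pT.1).
by congr udiag; apply/matrixP => i j; rewrite !mxE ord1 -expr2 sqrtCK.
Qed.

Lemma mxtrace_resolvent n (K : 'M[C]_n) (c a : C) : psdmx K -> 0 < c -> 0 <= a ->
  \tr (K *m invmx (c%:M + a *: K)) =
  \sum_i spectral_diag K 0 i / (c + a * spectral_diag K 0 i).
Proof.
move=> pK c0 a0; have uU := spectral_unitarymx K.
have eK := hermitian_udiag_spectral pK.1.
have -> : c%:M + a *: K = udiag (spectralmx K) (const_mx c + a *: spectral_diag K).
  by rewrite [in LHS]eK (scalar_udiag uU c) udiagZ udiagD.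
have pos i : 0 < (const_mx c + a *: spectral_diag K) 0 i.
  by rewrite !mxE ltr_wpDr // mulr_ge0 ?psdmx_spectral_ge0.
rewrite (mulmx1_invmx (udiag_mulV uU (fun i => lt0r_neq0 (pos i)))).
by rewrite [in X in X *m _]eK udiagM // mxtrace_udiag //; apply: eq_bigr => i _; rewrite !mxE.
Qed.

End SpectralPsd.

Section ResolventSum.
Variables (R : realFieldType) (n : nat) (lam : 'I_n -> R).
Hypothesis lam_ge0 : forall i, 0 <= lam i.
Hypothesis lam_pos : exists i, 0 < lam i.

Definition res_sum (c a : R) := \sum_i lam i / (c + a * lam i).

Lemma res_sum_gt0 {c a : R} : 0 < c -> 0 <= a -> 0 < res_sum c a.
Proof.
move=> c0 a0; have [i li] := lam_pos; rewrite /res_sum (bigD1 i) //= ltr_wpDr //.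
  by apply: sumr_ge0 => j _; rewrite divr_ge0 // addr_ge0 ?mulr_ge0 // ltW.
by rewrite divr_gt0 // ltr_wpDr ?mulr_ge0.
Qed.

Lemma res_sum_antitone {c a a' : R} : 0 < c -> 0 <= a -> a <= a' -> res_sum c a' <= res_sum c a.
Proof.
move=> c0 a0 aa'; apply: ler_sum => i _; rewrite ler_wpM2l // lef_pV2 ?posrE.
- by rewrite lerD2l ler_wpM2r.
- by rewrite ltr_wpDr // mulr_ge0 // (le_trans a0).
- by rewrite ltr_wpDr // mulr_ge0.
Qed.

Lemma res_sum_homog (k c a : R) : res_sum (k * c) (k * a) = k^-1 * res_sum c a.
Proof.
rewrite /res_sum mulr_sumr; apply: eq_bigr => i _.
by rewrite -mulrA -mulrDr invfM mulrCA.
Qed.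

Lemma res_sum_lt {c c' a : R} : 0 < c -> c < c' -> 0 <= a -> res_sum c' a < res_sum c a.
Proof.
move=> c0 cc' a0; have [i li] := lam_pos.
have c'0 := lt_trans c0 cc'.
have pos x j : 0 < x -> 0 < x + a * lam j by move=> x0; rewrite ltr_wpDr ?mulr_ge0.
rewrite /res_sum (bigD1 i) // [X in _ < X](bigD1 i) //= ltr_leD //.
  by rewrite ltr_pM2l // ltf_pV2 ?posrE ?pos // ltrD2r.
apply: ler_sum => j _; rewrite ler_wpM2l // lef_pV2 ?posrE ?pos //.
by rewrite lerD2r ltW.
Qed.

Lemma res_sum_scale {c a al : R} : 0 < c -> 0 <= a -> 1 < al -> res_sum c (a / al) < al * res_sum c a.
Proof.
move=> c0 a0 al1; have al0 : 0 < al := lt_trans ltr01 al1.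
rewrite -{2}[al]invrK -res_sum_homog mulrC.
apply: res_sum_lt; first by rewrite mulr_gt0 ?invr_gt0.
  by rewrite gtr_pMl // invf_lt1.
by rewrite mulr_ge0 // invr_ge0 ltW.
Qed.

End ResolventSum.

Section MonotoneScalableFixpoint.
Variable R : realType.
Variables (F1 F2 : R -> R -> R) (dM gM dm gm : R).
Hypothesis F1_mono : forall d g d' g', 0 < d -> 0 < g -> 0 < d' -> 0 < g' ->
  d <= d' -> g' <= g -> F1 d g <= F1 d' g'.
Hypothesis F2_mono : forall d g d' g', 0 < d -> 0 < g -> 0 < d' -> 0 < g' ->
  d <= d' -> g' <= g -> F2 d' g' <= F2 d g.
Hypothesis F1_scale : forall d g al, 0 < d -> 0 < g -> 1 < al ->
  F1 (al * d) (g / al) < al * F1 d g.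
Hypothesis F2_scale : forall d g al, 0 < d -> 0 < g -> 1 < al ->
  F2 d g < al * F2 (al * d) (g / al).

Lemma fixpoint_le (d1 g1 d2 g2 : R) : 0 < d1 -> 0 < g1 -> 0 < d2 -> 0 < g2 ->
  F1 d1 g1 = d1 -> F2 d1 g1 = g1 -> F1 d2 g2 = d2 -> F2 d2 g2 = g2 ->
  d2 <= d1 /\ g1 <= g2.
Proof.
move=> d1_0 g1_0 d2_0 g2_0 f1 e1 f2 e2.
have [//|] := boolP ((d2 <= d1) && (g1 <= g2)); first by case/andP.
(* al is the least factor for which (al * d1, g1 / al) dominates (d2, g2). *)
set al := Num.max (d2 / d1) (g1 / g2) => hn.
have al1 : 1 < al.
  rewrite lt_max ltr_pdivlMr // ltr_pdivlMr // !mul1r.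
  by move: hn; rewrite negb_and -!ltNge.
have al0 : 0 < al := lt_trans ltr01 al1.
have hd : d2 <= al * d1 by rewrite -ler_pdivrMr // le_max lexx.
have hg : g1 / al <= g2.
  by rewrite ler_pdivrMr // mulrC -ler_pdivrMr // le_max lexx orbT.
have ltd : d2 / d1 < al.
  have := F1_scale d1_0 g1_0 al1; rewrite f1 ltr_pdivrMr // -f2; apply: le_lt_trans.
  exact: F1_mono d2_0 g2_0 (mulr_gt0 al0 d1_0) (divr_gt0 g1_0 al0) hd hg.
have ltg : g1 / g2 < al.
  have := F2_scale d1_0 g1_0 al1; rewrite e1 ltr_pdivrMr //; move/lt_le_trans; apply.
  rewrite ler_pM2l // -[X in _ <= X]e2.
  exact: F2_mono d2_0 g2_0 (mulr_gt0 al0 d1_0) (divr_gt0 g1_0 al0) hd hg.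
have : al < al by rewrite {1}/al gt_max ltd ltg.
by rewrite ltxx.
Qed.

Lemma fixpoint_unique (d1 g1 d2 g2 : R) : 0 < d1 -> 0 < g1 -> 0 < d2 -> 0 < g2 ->
  F1 d1 g1 = d1 -> F2 d1 g1 = g1 -> F1 d2 g2 = d2 -> F2 d2 g2 = g2 ->
  d2 = d1 /\ g2 = g1.
Proof.
move=> d1_0 g1_0 d2_0 g2_0 f1 e1 f2 e2.
have [le_d le_g] := fixpoint_le d1_0 g1_0 d2_0 g2_0 f1 e1 f2 e2.
have [ge_d ge_g] := fixpoint_le d2_0 g2_0 d1_0 g1_0 f2 e2 f1 e1.
by split; apply/eqP; rewrite eq_le ?le_d ?ge_d ?le_g ?ge_g.
Qed.

Hypothesis F1_gt0 : forall d g, 0 < d -> 0 < g -> 0 < F1 d g.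
Hypothesis F2_gt0 : forall d g, 0 < d -> 0 < g -> 0 < F2 d g.
Hypothesis F1_le : forall d g, 0 < d -> 0 < g -> F1 d g <= dM.
Hypothesis F2_le : forall d g, 0 < d -> 0 < g -> F2 d g <= gM.
Hypothesis dm_gt0 : 0 < dm.
Hypothesis gm_gt0 : 0 < gm.
Hypothesis F1_ge : forall d g, 0 < d -> 0 < g -> g <= gM -> dm <= F1 d g.
Hypothesis F2_ge : forall d g, 0 < d -> 0 < g -> d <= dM -> gm <= F2 d g.

Definition subfixpoint (d g : R) := [/\ 0 < d, 0 < g, F1 d g <= d & g <= F2 d g].

(* Subfixpoints are ordered by (d, g) <= (d', g') iff d' <= d and g <= g', for which
   F = (F1, F2) is monotone. *)
Lemma fixpoint_exists : exists d g, [/\ 0 < d, 0 < g, F1 d g = d & F2 d g = g].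
Proof.
have dM0 : 0 < dM := lt_le_trans (F1_gt0 ltr01 ltr01) (F1_le ltr01 ltr01).
have subM : subfixpoint dM gm by split=> //; [exact: F1_le | exact: F2_ge].
have sub_bounds d g : subfixpoint d g -> dm <= d /\ g <= gM.
  case=> d0 g0 h1 h2; have g1 : g <= gM := le_trans h2 (F2_le d0 g0).
  by split=> //; exact: le_trans (F1_ge d0 g0 g1) h1.
pose D := [set x : R | exists d g, subfixpoint d g /\ x = - d]%classic.
pose G := [set y : R | exists d, subfixpoint d y]%classic.
have Dn : (D !=set0)%classic by exists (- dM); exists dM, gm.
have Gn : (G !=set0)%classic by exists gm; exists dM.
have Dub : ubound D (- dm).
  by move=> x [d [g [hF ->]]]; rewrite lerN2; exact: (sub_bounds _ _ hF).1.
have Gub : ubound G gM by move=> y [d hF]; exact: (sub_bounds _ _ hF).2.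
have Dh : has_ubound D by exists (- dm).
have Gh : has_ubound G by exists gM.
set ds := - sup D; set gs := sup G.
have ds_le d g : subfixpoint d g -> ds <= d.
  by move=> hF; rewrite /ds lerNl; apply: ub_le_sup => //; exists d, g.
have gs_ge d g : subfixpoint d g -> g <= gs by move=> hF; apply: ub_le_sup => //; exists d.
have ds0 : 0 < ds by apply: lt_le_trans dm_gt0 _; rewrite /ds lerNr; exact: ge_sup.
have gs0 : 0 < gs by apply: lt_le_trans gm_gt0 _; exact: (gs_ge dM gm).
have s1 : F1 ds gs <= ds.
  rewrite /ds lerNr; apply: ge_sup => // x [d [g [hF ->]]]; rewrite lerN2.
  case: (hF) => d0 g0 h1 _; apply: le_trans h1.
  by apply: F1_mono => //; [exact: ds_le hF | exact: gs_ge hF].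
have s2 : gs <= F2 ds gs.
  apply: ge_sup => // y [d hF]; case: (hF) => d0 g0 _ h2; apply: le_trans h2 _.
  by apply: F2_mono => //; [exact: ds_le hF | exact: gs_ge hF].
have y1 := F1_gt0 ds0 gs0; have y2 := F2_gt0 ds0 gs0.
have hy : subfixpoint (F1 ds gs) (F2 ds gs).
  split=> //; [apply: le_trans (F1_mono _ _ _ _ s1 s2) _ => //|].
  exact: F2_mono.
exists ds, gs; split=> //; apply/eqP; rewrite eq_le.
  by rewrite s1 (ds_le _ _ hy).
by rewrite s2 (gs_ge _ _ hy).
Qed.

End MonotoneScalableFixpoint.

Section ComplexReal.
Variable R : realType.
Local Open Scope complex_scope.

Lemma ltr0c (k : R) : (0 < k%:C) = (0 < k).
Proof. by rewrite ltcE /= eqxx. Qed.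

Lemma Re_ge0K (x : R[i]) : 0 <= x -> (complex.Re x)%:C = x.
Proof. by move=> x0; apply: RRe_real; exact: ger0_real. Qed.

Lemma ler_Re (x y : R[i]) : x <= y -> complex.Re x <= complex.Re y.
Proof. by rewrite lecE => /andP[]. Qed.

Lemma Re_gt0 (x : R[i]) : 0 < x -> 0 < complex.Re x.
Proof. by rewrite ltcE => /andP[]. Qed.

Lemma Re_mulC (k : R) (x : R[i]) : complex.Re (k%:C * x) = k * complex.Re x.
Proof. by case: x => a b; rewrite /= mul0r subr0. Qed.

Lemma invnC_mul (k : nat) (x : R) : (k%:R : R[i])^-1 * x%:C = (x / k%:R)%:C.
Proof. by rewrite -(rmorph_nat (real_complex R)) -fmorphV -rmorphM mulrC. Qed.

Definition eigr n (K : 'M[R[i]]_n) i := complex.Re (spectral_diag K 0 i).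

Lemma eigr_ge0 n (K : 'M[R[i]]_n) i : psdmx K -> 0 <= eigr K i.
Proof. by move=> pK; move: (psdmx_spectral_ge0 i pK); rewrite lecE => /andP[]. Qed.

Lemma eigr_pos n (K : 'M[R[i]]_n) : psdmx K -> 0 < \tr K -> exists i, 0 < eigr K i.
Proof. by move=> pK /(psdmx_spectral_gt0 pK) [i ?]; exists i; exact: Re_gt0. Qed.

Lemma mxtrace_resolventE n (K : 'M[R[i]]_n) (c a : R) : psdmx K -> 0 < c -> 0 <= a ->
  \tr (K *m invmx (c%:C%:M + a%:C *: K)) = (res_sum (eigr K) c a)%:C.
Proof.
move=> pK c0 a0; rewrite mxtrace_resolvent ?ltr0c ?ler0c // /res_sum rmorph_sum.
apply: eq_bigr => i _; rewrite -(Re_ge0K (psdmx_spectral_ge0 i pK)).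
by rewrite fmorph_div rmorphD rmorphM.
Qed.

End ComplexReal.

Section Reduction.
Variable R : realType.
Local Notation C := (R[i]).
Local Open Scope complex_scope.

Variables (n l m : nat) (R1 : 'M[C]_n) (R2 T1 : 'M[C]_l) (T2 : 'M[C]_m) (z s : R).
Hypotheses (pR1 : psdmx R1) (pR2 : psdmx R2) (pT1 : psdmx T1) (pT2 : psdmx T2).
Hypotheses (z_gt0 : 0 < z) (s_ge0 : 0 <= s) (l_gt0 : (0 < l)%N) (m_gt0 : (0 < m)%N).
Hypotheses (trR1 : 0 < \tr R1) (trT1 : 0 < \tr T1) (trR2T1 : 0 < \tr (R2 *m T1)).
Hypothesis trT2 : 0 < \tr T2.
Implicit Types (d g al ob ou : R) (K : 'M[C]_l).

Let rl_gt0 : 0 < l%:R :> R. Proof. by rewrite ltr0n. Qed.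
Let rm_gt0 : 0 < m%:R :> R. Proof. by rewrite ltr0n. Qed.

(* T1 need not be invertible, so R2 T1 is symmetrized to S := T1^(1/2) R2 T1^(1/2). *)
Let B := sqrtmx T1.
Let S := B *m R2 *m B.
Let BB : B *m B = T1. Proof. exact: sqrtmxK. Qed.
Let pS : psdmx S. Proof. exact: (psdmx_congr (sqrtmx_psd pT1).1 pR2). Qed.
Let trS : 0 < \tr S.
Proof. by rewrite /S -mulmxA mxtrace_mulC -mulmxA BB. Qed.

Definition Gmx (d g : R) := (s * d)%:C *: T1 + (d * g)%:C *: S.
Definition Wmx d g := invmx (1%:M + Gmx d g).
Definition ntr (K : 'M[C]_l) d g := complex.Re (\tr (K *m Wmx d g)) / l%:R.

Lemma Gmx_psd d g : 0 <= d -> 0 <= g -> psdmx (Gmx d g).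
Proof. by move=> d0 g0; apply: psdmxD; apply: psdmxZ; rewrite // ler0c mulr_ge0. Qed.

Lemma unitmx_psd_Wmx d g : 0 <= d -> 0 <= g ->
  [/\ 1%:M + Gmx d g \in unitmx, psdmx (Wmx d g) & pdform (Wmx d g)].
Proof. by move=> d0 g0; exact: (psdmx_shift_inv ltr01 (Gmx_psd d0 g0)). Qed.

Section NormalizedTrace.
Variables (K : 'M[C]_l) (d g : R).
Hypotheses (pK : psdmx K) (d_ge0 : 0 <= d) (g_ge0 : 0 <= g).

Lemma mxtrace_Wmx_ge0 : 0 <= \tr (K *m Wmx d g).
Proof. by have [_ [_ ?] _] := unitmx_psd_Wmx d_ge0 g_ge0; exact: mxtrace_psd_mul_ge0. Qed.

Lemma ntr_ge0 : 0 <= ntr K d g.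
Proof.
by apply: divr_ge0 (ltW rl_gt0); move: mxtrace_Wmx_ge0; rewrite lecE => /andP[].
Qed.

Lemma ntr_gt0 : 0 < \tr K -> 0 < ntr K d g.
Proof.
move=> trK; have [_ _ pW] := unitmx_psd_Wmx d_ge0 g_ge0.
by rewrite divr_gt0 // Re_gt0 // mxtrace_psd_mul_gt0.
Qed.

Lemma mxtrace_Wmx : \tr (K *m Wmx d g) = (l%:R * ntr K d g)%:C.
Proof. by rewrite /ntr mulrC divfK ?lt0r_neq0 // Re_ge0K // mxtrace_Wmx_ge0. Qed.

Lemma ntrE : (l%:R)^-1 * \tr (K *m Wmx d g) = (ntr K d g)%:C.
Proof. by rewrite -(Re_ge0K mxtrace_Wmx_ge0) invnC_mul. Qed.

End NormalizedTrace.

Lemma ntr_antitone K d g d' g' : psdmx K -> 0 <= d -> 0 <= g -> 0 <= d' -> 0 <= g' ->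
  s * d <= s * d' -> d * g <= d' * g' -> ntr K d' g' <= ntr K d g.
Proof.
move=> pK d0 g0 d'0 g'0 sd dg; rewrite /ntr ler_pM2r; last by rewrite invr_gt0.
apply: ler_Re.
apply: mxtrace_invmx_shift_le ltr01 ltr01 (Gmx_psd d0 g0) (Gmx_psd d'0 g'0) _ pK.
have -> : 1%:M + Gmx d' g' - (1%:M + Gmx d g) =
    (s * d' - s * d)%:C *: T1 + (d' * g' - d * g)%:C *: S.
  by rewrite opprD addrACA subrr add0r /Gmx opprD addrACA !rmorphB !scalerBl.
by apply: psdmxD; apply: psdmxZ; rewrite // ler0c subr_ge0.
Qed.

Lemma ntr_le0 K d g : psdmx K -> 0 <= d -> 0 <= g -> ntr K d g <= ntr K 0 0.
Proof. by move=> pK d0 g0; apply: ntr_antitone; rewrite ?mulr0 ?mul0r ?mulr_ge0. Qed.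

Lemma ntr_scale_le K d g al : psdmx K -> 0 < d -> 0 <= g -> 1 < al ->
  ntr K (al * d) (g / al) <= ntr K d g.
Proof.
move=> pK d0 g0 al1; have al0 : 0 < al := lt_trans ltr01 al1.
have sd : s * d <= s * (al * d) by rewrite ler_wpM2l // ler_peMl // ltW.
have dg : d * g <= al * d * (g / al).
  by rewrite le_eqVlt (_ : al * d * (g / al) = d * g) ?eqxx //; field; exact: lt0r_neq0.
exact: (ntr_antitone pK (ltW d0) g0 (mulr_ge0 (ltW al0) (ltW d0)) (divr_ge0 g0 (ltW al0)) sd dg).
Qed.

Definition load d g := s * ntr T1 d g + g * ntr S d g.

Lemma load_ge0 d g : 0 <= d -> 0 <= g -> 0 <= load d g.
Proof. by move=> d0 g0; apply: addr_ge0; apply: mulr_ge0 => //; exact: ntr_ge0. Qed.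

(* Take traces in G (1 + G)^-1 = 1 - (1 + G)^-1. *)
Lemma mul_load d g : 0 <= d -> 0 <= g -> d * load d g = 1 - ntr 1%:M d g.
Proof.
move=> d0 g0; have [u _ _] := unitmx_psd_Wmx d0 g0.
have := mxtrace_mul_shift_inv u; rewrite -/(Wmx d g) -[X in _ - \tr X]mul1mx.
rewrite {1}/Gmx mulmxDl -!scalemxAl raddfD /= !mxtraceZ.
rewrite (mxtrace_Wmx pT1 d0 g0) (mxtrace_Wmx pS d0 g0).
rewrite (mxtrace_Wmx (psdmx_scalar _ ler01) d0 g0) -(rmorph_nat (real_complex R) l).
rewrite -!rmorphM -rmorphD -rmorphB => /complexI e.
apply: (mulfI (lt0r_neq0 rl_gt0)); rewrite mulrBr mulr1 -e /load; ring.
Qed.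

Lemma load_nondecr d g g' : 0 < d -> 0 <= g -> g <= g' -> load d g <= load d g'.
Proof.
move=> d0 g0 gg; have g'0 := le_trans g0 gg; have dw := ltW d0.
suff h : d * load d g <= d * load d g' by rewrite ler_pM2l in h.
rewrite [X in X <= _](mul_load dw g0) [X in _ <= X](mul_load dw g'0) lerD2l lerN2.
exact: (ntr_antitone (psdmx_scalar _ ler01) dw g0 dw g'0 (lexx _) (ler_wpM2l dw gg)).
Qed.

Lemma load_nonincr d d' g : 0 <= d -> d <= d' -> 0 <= g -> load d' g <= load d g.
Proof.
move=> d0 dd g0; have d'0 := le_trans d0 dd.
have sd := ler_wpM2l s_ge0 dd; have dg := ler_wpM2r g0 dd.
have hT1 : ntr T1 d' g <= ntr T1 d g := ntr_antitone pT1 d0 g0 d'0 g0 sd dg.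
have hS : ntr S d' g <= ntr S d g := ntr_antitone pS d0 g0 d'0 g0 sd dg.
exact: (lerD (ler_wpM2l s_ge0 hT1) (ler_wpM2l g0 hS)).
Qed.

Lemma load_scale d g al : 0 < d -> 0 <= g -> 1 < al ->
  load d g / al <= load (al * d) (g / al).
Proof.
move=> d0 g0 al1; have al0 : 0 < al := lt_trans ltr01 al1.
have ad0 : 0 <= al * d := mulr_ge0 (ltW al0) (ltW d0).
have ga0 : 0 <= g / al := divr_ge0 g0 (ltW al0).
rewrite ler_pdivrMr //.
suff h : d * load d g <= al * d * load (al * d) (g / al).
  by rewrite (_ : al * d * _ = d * (load (al * d) (g / al) * al)) ?ler_pM2l in h; last ring.
rewrite [X in X <= _](mul_load (ltW d0) g0) [X in _ <= X](mul_load ad0 ga0).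
rewrite lerD2l lerN2; exact: (ntr_scale_le (psdmx_scalar _ ler01) d0 g0 al1).
Qed.

(* d (1 + G(d, g))^-1 = (d^-1 + s T1 + g S)^-1, which increases with d. *)
Lemma mul_ntrS_nondecr d d' g : 0 < d -> d <= d' -> 0 <= g ->
  d * ntr S d g <= d' * ntr S d' g.
Proof.
move=> d0 dd g0; have d'0 : 0 < d' := lt_le_trans d0 dd.
set H := s%:C *: T1 + g%:C *: S.
have pH : psdmx H by apply: psdmxD; apply: psdmxZ; rewrite ?ler0c.
have eW x : 0 < x -> x%:C * \tr (S *m Wmx x g) = \tr (S *m invmx ((x%:C)^-1%:M + H)).
  move=> x0; have [u _ _] := unitmx_psd_Wmx (ltW x0) g0.
  have eG : Gmx x g = x%:C *: H by rewrite /Gmx /H scalerDr !scalerA -!rmorphM mulrC.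
  have x_neq0 : x%:C != 0 by rewrite gt_eqF // ltr0c.
  by rewrite -mxtraceZ scalemxAr /Wmx eG invmx_scale // -eG.
rewrite /ntr !mulrA ler_pM2r; last by rewrite invr_gt0.
rewrite -!Re_mulC; apply: ler_Re; rewrite (eW d d0) (eW d' d'0).
have c0 (x : R) : 0 < x -> 0 < (x%:C)^-1 by move=> x0; rewrite invr_gt0 ltr0c.
apply: (mxtrace_invmx_shift_le (c0 _ d'0) (c0 _ d0) pH pH _ pS).
rewrite opprD addrACA subrr addr0 -raddfB /=; apply: psdmx_scalar.
by rewrite -!fmorphV -rmorphB ler0c subr_ge0 lef_pV2.
Qed.

Let eR1_ge0 i : 0 <= eigr R1 i := eigr_ge0 i pR1.
Let eT2_ge0 i : 0 <= eigr T2 i := eigr_ge0 i pT2.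
Let eR1_pos := eigr_pos pR1 trR1.
Let eT2_pos := eigr_pos pT2 trT2.

Let lm_ge0 : 0 <= l%:R / m%:R :> R. Proof. by rewrite divr_ge0 ?ler0n. Qed.

Definition coupling d g := l%:R / m%:R * (d * ntr S d g).
Definition deltaF d g := res_sum (eigr R1) z (load d g) / l%:R.
Definition gammaF d g := res_sum (eigr T2) 1 (coupling d g) / m%:R.

Lemma coupling_ge0 d g : 0 <= d -> 0 <= g -> 0 <= coupling d g.
Proof.
by move=> d0 g0; apply: mulr_ge0 lm_ge0 (mulr_ge0 d0 (ntr_ge0 pS d0 g0)).
Qed.

Lemma deltaF_mono d g d' g' : 0 < d -> 0 < g -> 0 < d' -> 0 < g' ->
  d <= d' -> g' <= g -> deltaF d g <= deltaF d' g'.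
Proof.
move=> d0 g0 d'0 g'0 dd gg; rewrite /deltaF ler_pM2r; last by rewrite invr_gt0.
apply: (res_sum_antitone eR1_ge0 z_gt0 (load_ge0 (ltW d'0) (ltW g'0))).
exact: (le_trans (load_nondecr d'0 (ltW g'0) gg) (load_nonincr (ltW d0) dd (ltW g0))).
Qed.

Lemma gammaF_mono d g d' g' : 0 < d -> 0 < g -> 0 < d' -> 0 < g' ->
  d <= d' -> g' <= g -> gammaF d' g' <= gammaF d g.
Proof.
move=> d0 g0 d'0 g'0 dd gg; rewrite /gammaF ler_pM2r; last by rewrite invr_gt0.
apply: (res_sum_antitone eT2_ge0 ltr01 (coupling_ge0 (ltW d0) (ltW g0))).
rewrite /coupling; apply: (ler_wpM2l lm_ge0).
apply: le_trans (mul_ntrS_nondecr d0 dd (ltW g0)) _; apply: (ler_wpM2l (ltW d'0)).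
exact: (ntr_antitone pS (ltW d'0) (ltW g'0) (ltW d'0) (ltW g0) (lexx _) (ler_wpM2l (ltW d'0) gg)).
Qed.

Lemma deltaF_scale d g al : 0 < d -> 0 < g -> 1 < al ->
  deltaF (al * d) (g / al) < al * deltaF d g.
Proof.
move=> d0 g0 al1; have al0 : 0 < al := lt_trans ltr01 al1.
rewrite /deltaF mulrA ltr_pM2r; last by rewrite invr_gt0.
have load0 := load_ge0 (ltW d0) (ltW g0).
apply: le_lt_trans (res_sum_scale eR1_ge0 eR1_pos z_gt0 load0 al1).
apply: (res_sum_antitone eR1_ge0 z_gt0 (divr_ge0 load0 (ltW al0))).
exact: (load_scale d0 (ltW g0) al1).
Qed.

Lemma gammaF_scale d g al : 0 < d -> 0 < g -> 1 < al ->
  gammaF d g < al * gammaF (al * d) (g / al).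
Proof.
move=> d0 g0 al1; have al0 : 0 < al := lt_trans ltr01 al1.
have ad0 : 0 < al * d := mulr_gt0 al0 d0; have ga0 : 0 < g / al := divr_gt0 g0 al0.
rewrite /gammaF mulrA ltr_pM2r; last by rewrite invr_gt0.
have c0 := coupling_ge0 (ltW d0) (ltW g0).
have := res_sum_scale eT2_ge0 eT2_pos ltr01 (mulr_ge0 (ltW al0) c0) al1.
rewrite (_ : _ / al = coupling d g); last by rewrite mulrAC mulfV ?mul1r // lt0r_neq0.
move/lt_le_trans; apply; rewrite (ler_pM2l al0).
apply: (res_sum_antitone eT2_ge0 ltr01 (coupling_ge0 (ltW ad0) (ltW ga0))).
rewrite /coupling [X in _ <= X](_ : _ = l%:R / m%:R * (al * d * ntr S d g)); last by ring.
apply: (ler_wpM2l lm_ge0); apply: (ler_wpM2l (ltW ad0)).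
exact: (ntr_scale_le pS d0 (ltW g0) al1).
Qed.

Lemma deltaF_gt0 d g : 0 < d -> 0 < g -> 0 < deltaF d g.
Proof.
move=> d0 g0; rewrite divr_gt0 ?ltr0n //.
exact: (res_sum_gt0 eR1_ge0 eR1_pos z_gt0 (load_ge0 (ltW d0) (ltW g0))).
Qed.

Lemma gammaF_gt0 d g : 0 < d -> 0 < g -> 0 < gammaF d g.
Proof.
move=> d0 g0; rewrite divr_gt0 ?ltr0n //.
exact: (res_sum_gt0 eT2_ge0 eT2_pos ltr01 (coupling_ge0 (ltW d0) (ltW g0))).
Qed.

Let dM := res_sum (eigr R1) z 0 / l%:R.
Let gM := res_sum (eigr T2) 1 0 / m%:R.

Lemma deltaF_le d g : 0 < d -> 0 < g -> deltaF d g <= dM.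
Proof.
move=> d0 g0; rewrite /deltaF ler_pM2r; last by rewrite invr_gt0.
exact: (res_sum_antitone eR1_ge0 z_gt0 (lexx (0 : R)) (load_ge0 (ltW d0) (ltW g0))).
Qed.

Lemma gammaF_le d g : 0 < d -> 0 < g -> gammaF d g <= gM.
Proof.
move=> d0 g0; rewrite /gammaF ler_pM2r; last by rewrite invr_gt0.
exact: (res_sum_antitone eT2_ge0 ltr01 (lexx (0 : R)) (coupling_ge0 (ltW d0) (ltW g0))).
Qed.

Lemma deltaF_ge d g : 0 < d -> 0 < g -> g <= gM ->
  res_sum (eigr R1) z (s * ntr T1 0 0 + gM * ntr S 0 0) / l%:R <= deltaF d g.
Proof.
move=> d0 g0 gg; rewrite /deltaF ler_pM2r; last by rewrite invr_gt0.
apply: (res_sum_antitone eR1_ge0 z_gt0 (load_ge0 (ltW d0) (ltW g0))).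
apply: lerD; first exact: (ler_wpM2l s_ge0 (ntr_le0 pT1 (ltW d0) (ltW g0))).
exact: (ler_pM (ltW g0) (ntr_ge0 pS (ltW d0) (ltW g0)) gg (ntr_le0 pS (ltW d0) (ltW g0))).
Qed.

Lemma gammaF_ge d g : 0 < d -> 0 < g -> d <= dM ->
  res_sum (eigr T2) 1 (l%:R / m%:R * (dM * ntr S 0 0)) / m%:R <= gammaF d g.
Proof.
move=> d0 g0 dd; rewrite /gammaF ler_pM2r; last by rewrite invr_gt0.
apply: (res_sum_antitone eT2_ge0 ltr01 (coupling_ge0 (ltW d0) (ltW g0))).
apply: (ler_wpM2l lm_ge0).
exact: (ler_pM (ltW d0) (ntr_ge0 pS (ltW d0) (ltW g0)) dd (ntr_le0 pS (ltW d0) (ltW g0))).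
Qed.

Lemma reduced_fixpoint_exists :
  exists d g, [/\ 0 < d, 0 < g, deltaF d g = d & gammaF d g = g].
Proof.
have n0 K : psdmx K -> 0 <= ntr K 0 0 := fun pK => ntr_ge0 pK (lexx 0) (lexx 0).
have dM0 : 0 < dM := lt_le_trans (deltaF_gt0 ltr01 ltr01) (deltaF_le ltr01 ltr01).
have gM0 : 0 < gM := lt_le_trans (gammaF_gt0 ltr01 ltr01) (gammaF_le ltr01 ltr01).
apply: (fixpoint_exists deltaF_mono gammaF_mono deltaF_gt0 gammaF_gt0 deltaF_le gammaF_le
  _ _ deltaF_ge gammaF_ge); rewrite divr_gt0 ?ltr0n //.
  apply: (res_sum_gt0 eR1_ge0 eR1_pos z_gt0).
  exact: (addr_ge0 (mulr_ge0 s_ge0 (n0 _ pT1)) (mulr_ge0 (ltW gM0) (n0 _ pS))).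
apply: (res_sum_gt0 eT2_ge0 eT2_pos ltr01).
exact: (mulr_ge0 lm_ge0 (mulr_ge0 (ltW dM0) (n0 _ pS))).
Qed.

Lemma delta_eqE d g : 0 <= d -> 0 <= g ->
  (l%:R)^-1 * \tr (R1 *m invmx (z%:C%:M + (s * ntr T1 d g + g * ntr S d g)%:C *: R1))
  = (deltaF d g)%:C.
Proof. by move=> d0 g0; rewrite (mxtrace_resolventE pR1 z_gt0 (load_ge0 d0 g0)) invnC_mul. Qed.

Lemma gamma_eqE d g : 0 <= d -> 0 <= g ->
  (m%:R)^-1 * \tr (T2 *m invmx (1%:M + (l%:R / m%:R * d * ntr S d g)%:C *: T2))
  = (gammaF d g)%:C.
Proof.
move=> d0 g0; have -> : (1%:M : 'M[C]_m) = (1%:C)%:M by rewrite rmorph1.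
by rewrite -mulrA (mxtrace_resolventE pT2 ltr01 (coupling_ge0 d0 g0)) invnC_mul.
Qed.

(* The push-through identity moves T1 = B^2 around R2 T1, turning the resolvent of
   R2 T1 into that of the Hermitian matrix S. *)
Lemma omega_eqE d g : 0 <= d -> 0 <= g ->
  let Q := invmx (1%:M + (s * d)%:C *: T1 + (d * g)%:C *: (R2 *m T1)) in
  \tr (T1 *m Q) = \tr (T1 *m Wmx d g) /\ \tr (R2 *m T1 *m Q) = \tr (S *m Wmx d g).
Proof.
move=> d0 g0 Q; set P := (s * d)%:C%:M + (d * g)%:C *: R2.
have e1 : 1%:M + (s * d)%:C *: T1 + (d * g)%:C *: (R2 *m T1) = 1%:M + P *m (B *m B).
  by rewrite BB /P mulmxDl mul_scalar_mx -scalemxAl addrA.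
have e2 : B *m P *m B = Gmx d g.
  by rewrite /P /Gmx mulmxDr mulmxDl mul_mx_scalar -scalemxAl BB -scalemxAr -scalemxAl.
have [u _ _] := unitmx_psd_Wmx d0 g0; rewrite -e2 in u.
have [_ pt] := push_through u; rewrite /Q e1; split.
  by rewrite -{1}BB pt e2 mxtrace_mulC mulmxA BB.
by rewrite -mulmxA -{1}BB pt e2 mulmxA mxtrace_mulC /S !mulmxA.
Qed.

Lemma is_solutionE d ob ou g : 0 <= d -> 0 <= g ->
  is_solution R1 R2 T1 T2 z s d ob ou g <->
  [/\ ob = ntr T1 d g, ou = ntr S d g, deltaF d g = d & gammaF d g = g].
Proof.
move=> d0 g0; have [eT1 eS] := omega_eqE d0 g0.
rewrite /is_solution; cbv zeta.
rewrite eT1 eS (ntrE pT1 d0 g0) (ntrE pS d0 g0); split.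
  case=> e1 /complexI eb /complexI eu e4; subst ob ou.
  by split=> //; apply: complexI; rewrite ?e1 ?e4 ?delta_eqE ?gamma_eqE.
by case=> -> -> fd fg; split; rewrite ?delta_eqE ?gamma_eqE ?fd ?fg.
Qed.

Theorem reduced_system_unique_solution : exists d omb omu g,
  [/\ 0 < d, 0 < omb, 0 < omu & 0 < g] /\
  is_solution R1 R2 T1 T2 z s d omb omu g /\
  forall d' omb' omu' g', [/\ 0 < d', 0 < omb', 0 < omu' & 0 < g'] ->
    is_solution R1 R2 T1 T2 z s d' omb' omu' g' ->
    [/\ d' = d, omb' = omb, omu' = omu & g' = g].
Proof.
have [d [g [d0 g0 fd fg]]] := reduced_fixpoint_exists.
have [dw gw] := (ltW d0, ltW g0).
exists d, (ntr T1 d g), (ntr S d g), g; split.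
  by split=> //; [exact: (ntr_gt0 pT1 dw gw trT1) | exact: (ntr_gt0 pS dw gw trS)].
split; first exact/(is_solutionE _ _ dw gw).
move=> d' ob' ou' g' [d'0 _ _ g'0] /(is_solutionE _ _ (ltW d'0) (ltW g'0)) [-> -> fd' fg'].
have [-> ->] := fixpoint_unique deltaF_mono gammaF_mono deltaF_scale gammaF_scale
  d0 g0 d'0 g'0 fd fg fd' fg'.
by [].
Qed.

End Reduction.

Lemma adjmxE (R : rcfType) m n (A : 'M[R[i]]_(m, n)) : adjmx A = A^t*.
Proof. by apply/matrixP => i j; rewrite !mxE. Qed.

Lemma hermitian_psd_psdmx (R : rcfType) n (A : 'M[R[i]]_n) : hermitian_psd A -> psdmx A.
Proof. by case=> hA nA; split=> [|x]; rewrite -?adjmxE // /qform -!adjmxE. Qed.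

Lemma gt0_of_mean_ge (R : realType) k (t : R[i]) (c : R) : 0 < c -> (0 < k)%N ->
  (c%:C <= (k%:R)^-1 * t)%C -> 0 < t.
Proof.
move=> c0 k0 h; have mean0 : 0 < (k%:R)^-1 * t by apply: lt_le_trans h; rewrite ltr0c.
have k_neq0 : (k%:R : R[i]) != 0 by rewrite pnatr_eq0 -lt0n.
by rewrite -(mulVKf k_neq0 t) mulr_gt0 ?ltr0n.
Qed.

Local Close Scope sesquilinear_scope.
Unset Implicit Arguments.

Theorem proposition1 (R : realType)
  (L M : nat -> nat)
  (R1 : forall N : nat, 'M[R[i]]_N)
  (R2 T1 : forall N : nat, 'M[R[i]]_(L N))
  (T2 : forall N : nat, 'M[R[i]]_(M N))
  (r l : R)
  (* N, L(N), M(N) are positive integers *)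
  (HLpos : forall N, (0 < N)%N -> (0 < L N)%N)
  (HMpos : forall N, (0 < N)%N -> (0 < M N)%N)
  (* Hermitian positive semidefinite *)
  (HR1 : forall N, hermitian_psd (R1 N))
  (HR2 : forall N, hermitian_psd (R2 N))
  (HT1 : forall N, hermitian_psd (T1 N))
  (HT2 : forall N, hermitian_psd (T2 N))
  (* (A.1): limsup M/N < oo, 0 < liminf L/N, limsup L/N < oo *)
  (HA1M : exists C : R, exists N0 : nat, forall N, (N0 <= N)%N -> (0 < N)%N ->
            (M N)%:R / N%:R <= C)
  (HA1L : exists c C : R, 0 < c /\ exists N0 : nat, forall N, (N0 <= N)%N -> (0 < N)%N ->
            c <= (L N)%:R / N%:R <= C)
  (* (A.2) *)
  (Hr : forall N, (0 < N)%N ->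
     Num.max (Num.max (specnorm (R1 N)) (specnorm (R2 N)))
             (Num.max (specnorm (T1 N)) (specnorm (T2 N))) <= r)
  (* (A.3) *)
  (hl : 0 < l)
  (Hl : forall N, (0 < N)%N ->
     [/\ (l%:C <= ((L N)%:R)^-1 * \tr (R2 N *m T1 N))%C,
         (l%:C <= (N%:R)^-1 * \tr (R1 N))%C,
         (l%:C <= ((L N)%:R)^-1 * \tr (R2 N))%C,
         (l%:C <= ((L N)%:R)^-1 * \tr (T1 N))%C
       & (l%:C <= ((M N)%:R)^-1 * \tr (T2 N))%C]) :
  forall N : nat, (0 < N)%N ->
  forall z sb : R, 0 < z -> 0 <= sb ->
  exists delta omb omu gam : R,
    [/\ 0 < delta, 0 < omb, 0 < omu & 0 < gam] /\
    is_solution (R1 N) (R2 N) (T1 N) (T2 N) z sb delta omb omu gam /\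
    forall delta' omb' omu' gam' : R,
      [/\ 0 < delta', 0 < omb', 0 < omu' & 0 < gam'] ->
      is_solution (R1 N) (R2 N) (T1 N) (T2 N) z sb delta' omb' omu' gam' ->
      [/\ delta' = delta, omb' = omb, omu' = omu & gam' = gam].
Proof.
move=> N N_gt0 z sb z_gt0 sb_ge0.
have [lRT lR1 _ lT1 lT2] := Hl N N_gt0.
have LN := HLpos N N_gt0; have MN := HMpos N N_gt0.
exact: (reduced_system_unique_solution
  (hermitian_psd_psdmx (HR1 N)) (hermitian_psd_psdmx (HR2 N))
  (hermitian_psd_psdmx (HT1 N)) (hermitian_psd_psdmx (HT2 N)) z_gt0 sb_ge0 LN MN
  (gt0_of_mean_ge hl N_gt0 lR1) (gt0_of_mean_ge hl LN lT1)
  (gt0_of_mean_ge hl LN lRT) (gt0_of_mean_ge hl MN lT2)).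
Qed.
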